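(* Let $K$ be an almost real closed field and let $p$ be a prime. Consider the formulae in the language of rings $\{+,\cdot\}$ (with constants $0,1$) \[\psi_p(x) := \big[\neg\exists y\colon (y^p = x \vee y^p = -x)\big] \wedge \big[\exists z\colon z^p = 1+x\big],\] \[\varphi_p(x) := \psi_p(x) \vee \big[\exists y\colon (y^p = x \vee y^p = -x) \wedge (\forall z\colon \psi_p(z) \rightarrow \psi_p(xz))\big] \vee x = 0.\] Then $\varphi_p(K) = \mathcal O_{v_p}$; in particular the valuation $v_p$ is definable in $(K,+,\cdot)$ (even without parameters).
   Context: A field $K$ is almost real closed if it admits a henselian valuation whose residue field is real closed; such a field is formally real. On a formally real field the henselian valuations are linearly ordered by inclusion of valuation rings, and the canonical henselian valuation $v_K$ is the finest one (its valuation ring is the smallest). Write $G := v_K(K^\times)$, an ordered abelian group written additively. For a convex subgroup $\Delta\subseteq G$ let $v_\Delta$ be the coarsening of $v_K$ given by $a\mapsto v_K(a)+\Delta \in G/\Delta$; every $v_\Delta$ is henselian and $\Delta\mapsto v_\Delta$ is a bijection between convex subgroups of $G$ and henselian valuations on $K$. For a prime $p$, $G_p$ denotes the maximal convex $p$-divisible subgroup of $G$, and $v_p := v_{G_p}$. $\mathcal O_v$ denotes the valuation ring of a valuation $v$. *)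

From mathcomp Require Import all_boot all_order all_algebra.
Set Implicit Arguments. Unset Strict Implicit. Unset Printing Implicit Defensive.
Import GRing.Theory.
Local Open Scope ring_scope.

Section Valuations.
Variable K : fieldType.

(* A valuation on K is represented (up to equivalence) by its valuation ring. *)
Definition valuation_ring (O : K -> Prop) : Prop :=
  [/\ O 0, O 1,
      (forall x y, O x -> O y -> O (x - y)),
      (forall x y, O x -> O y -> O (x * y)) &
      (forall x, x != 0 -> O x \/ O x^-1)].

Definition maxideal (O : K -> Prop) (x : K) : Prop :=
  O x /\ ~ (x != 0 /\ O x^-1).

Definition henselian (O : K -> Prop) : Prop :=
  valuation_ring O /\
  forall (f : {poly K}) (a : K),
    (forall i, O f`_i) -> O a ->
    maxideal O f.[a] -> ~ maxideal O (f^`()).[a] ->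
    exists b, [/\ O b, f.[b] = 0 & maxideal O (b - a)].

(* The residue field O/m is real closed (Artin--Schreier definition:
   formally real, every element is a square or minus a square,
   every odd degree polynomial has a root), expressed on representatives. *)
Definition residue_real_closed (O : K -> Prop) : Prop :=
  [/\ (forall s : seq K, (forall y, y \in s -> O y) -> ~ maxideal O (1 + \sum_(y <- s) y ^+ 2)),
      (forall a, O a -> exists b, O b /\ (maxideal O (b ^+ 2 - a) \/ maxideal O (b ^+ 2 + a))) &
      (forall f : {poly K}, (forall i, O f`_i) -> f \is monic -> odd (size f).-1 ->
         exists b, O b /\ maxideal O f.[b])].

Definition almost_real_closed : Prop :=
  exists O, henselian O /\ residue_real_closed O.

(* canonical henselian valuation of a formally real field: the finest
   henselian valuation, i.e. the smallest henselian valuation ring. *)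
Definition canonical_henselian (OK : K -> Prop) : Prop :=
  henselian OK /\ forall O, henselian O -> forall x, OK x -> O x.

(* Subsets of G = v_K(K^x) are represented by their preimages D in K^x.
   For nonzero x, y: v_K(x) <= v_K(y) iff OK (y / x). *)
Definition convex_subgroup (OK : K -> Prop) (D : K -> Prop) : Prop :=
  [/\ (forall x, D x -> x != 0), D 1,
      (forall x y, D x -> D y -> D (x * y)),
      (forall x, D x -> D x^-1) &
      (* convexity: 0 <= v(y) <= v(x), x in D  ==> y in D *)
      (forall x y, D x -> y != 0 -> OK y -> OK (x / y) -> D y)].

Definition p_divisible (OK : K -> Prop) (p : nat) (D : K -> Prop) : Prop :=
  forall x, D x -> exists y, [/\ D y, OK (y ^+ p / x) & OK (x / y ^+ p)].

Definition is_Gp (OK : K -> Prop) (p : nat) (D : K -> Prop) : Prop :=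
  [/\ convex_subgroup OK D, p_divisible OK p D &
      forall D', convex_subgroup OK D' -> p_divisible OK p D' ->
        forall x, D' x -> D x].

(* valuation ring of the coarsening v_Delta : a |-> v_K(a) + Delta *)
Definition coarsening (OK : K -> Prop) (D : K -> Prop) (x : K) : Prop :=
  x = 0 \/ exists d, D d /\ OK (x / d).

Definition psi_p (p : nat) (x : K) : Prop :=
  ~ (exists y : K, y ^+ p = x \/ y ^+ p = - x) /\ exists z : K, z ^+ p = 1 + x.

Definition phi_p (p : nat) (x : K) : Prop :=
  psi_p p x \/
  (exists y : K, (y ^+ p = x \/ y ^+ p = - x) /\
                 forall z : K, psi_p p z -> psi_p p (x * z)) \/
  x = 0.

End Valuations.

(* Units of O_K are units of a henselian valuation ring O whose residue field
   is real closed, so each one is a +-p-th power modulo the maximal ideal of O,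
   and Hensel's lemma lifts the root because K is formally real (p is a unit).
   For the same reason 1 + m_K consists of p-th powers, so psi_p defines the
   elements of m_K that are not +-p-th powers.  If a +-p-th power x lies outside
   O_K and x * psi_p(K) is contained in psi_p(K), then every element of the
   convex subgroup generated by v_K(x) is a +-p-th power; such a convex subgroup
   is p-divisible and therefore lies in G_p, i.e. x is a unit of v_p. *)

From mathcomp Require Import all_boot all_order all_algebra.
From mathcomp.algebra_tactics Require Import ring.
From Stdlib Require Import Classical.

Set Implicit Arguments. Unset Strict Implicit. Unset Printing Implicit Defensive.
Import GRing.Theory.
Local Open Scope ring_scope.

Section ValuationRing.
Variables (K : fieldType) (O : K -> Prop).
Hypothesis vO : valuation_ring O.

Lemma vr0 : O 0. Proof. by case: vO. Qed.
Lemma vr1 : O 1. Proof. by case: vO. Qed.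
Lemma vrB x y : O x -> O y -> O (x - y). Proof. by case: vO => _ _ h _ _; apply: h. Qed.
Lemma vrM x y : O x -> O y -> O (x * y). Proof. by case: vO => _ _ _ h _; apply: h. Qed.

Lemma vrN x : O x -> O (- x).
Proof. by move=> Ox; rewrite -sub0r; apply: vrB => //; exact: vr0. Qed.

Lemma vrD x y : O x -> O y -> O (x + y).
Proof. by move=> Ox Oy; rewrite -[y]opprK; apply: vrB => //; exact: vrN. Qed.

Lemma vr_nat n : O n%:R.
Proof. by elim: n => [|n IH]; [exact: vr0 | rewrite mulrS; apply: vrD => //; exact: vr1]. Qed.

Lemma vrX x n : O x -> O (x ^+ n).
Proof. by move=> Ox; elim: n => [|n IH]; [rewrite expr0; exact: vr1 | rewrite exprS; exact: vrM]. Qed.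

Lemma vr_total x : O x \/ O x^-1.
Proof.
have [->|x0] := eqVneq x 0; first by left; exact: vr0.
by case: vO => _ _ _ _; apply.
Qed.

Lemma vr_notin x : ~ O x -> x != 0 /\ O x^-1.
Proof.
move=> Ox; split; first by apply: contra_notN Ox => /eqP ->; exact: vr0.
by case: (vr_total x).
Qed.

Lemma vr_root n w : (0 < n)%N -> O (w ^+ n) -> O w.
Proof.
case: n => // n _ Own; have [->|w0] := eqVneq w 0; first exact: vr0.
case: (vr_total w) => // Ow'.
have -> : w = w ^+ n.+1 * w^-1 ^+ n by rewrite exprVn exprS mulfK // expf_neq0.
by apply: vrM => //; exact: vrX.
Qed.

Definition vunit x := [/\ x != 0, O x & O x^-1].

Lemma vunit1 : vunit 1.
Proof. by split; rewrite ?oner_neq0 ?invr1 //; exact: vr1. Qed.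

Lemma vunitM a b : vunit a -> vunit b -> vunit (a * b).
Proof.
move=> [a0 Oa Oa'] [b0 Ob Ob']; split; first by rewrite mulf_neq0.
  exact: vrM.
by rewrite invfM; exact: vrM.
Qed.

Lemma vunitV a : vunit a -> vunit a^-1.
Proof. by move=> [a0 Oa Oa']; split; rewrite ?invr_eq0 ?invrK. Qed.

Lemma vunitN a : vunit a -> vunit (- a).
Proof. by move=> [a0 Oa Oa']; split; rewrite ?oppr_eq0 ?invrN //; exact: vrN. Qed.

Lemma vunitX a n : vunit a -> vunit (a ^+ n).
Proof.
by move=> ua; elim: n => [|n IH]; [rewrite expr0; exact: vunit1 | rewrite exprS; exact: vunitM].
Qed.

Lemma maxideal_vunitF x : maxideal O x -> vunit x -> False.
Proof. by move=> [_ mx] [x0 _ Ox']; apply: mx. Qed.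

Lemma maxideal_nonunit x : O x -> ~ vunit x -> maxideal O x.
Proof. by move=> Ox ux; split => // -[x0 Ox']; apply: ux. Qed.

Lemma maxideal0 : maxideal O 0.
Proof. by split; [exact: vr0 | case; rewrite eqxx]. Qed.

Lemma maxidealMr a c : maxideal O a -> O c -> maxideal O (a * c).
Proof.
move=> [Oa ma] Oc; split; first exact: vrM.
move=> [+ Oac']; rewrite mulf_eq0 negb_or => /andP [a0 c0]; apply: ma.
split => //; have -> : a^-1 = c * (a * c)^-1 by rewrite invfM mulrCA mulfV ?mulr1.
exact: vrM.
Qed.

Lemma maxidealN a : maxideal O a -> maxideal O (- a).
Proof. by move=> ma; rewrite -mulrN1; apply: maxidealMr => //; apply: vrN; exact: vr1. Qed.

Lemma maxidealD a b : maxideal O a -> maxideal O b -> maxideal O (a + b).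
Proof.
wlog Oba : a b / O (b / a).
  move=> wlog ma mb; case: (vr_total (b / a)) => [Oba|]; first exact: wlog.
  by rewrite invf_div addrC => Oab; exact: wlog.
move=> [Oa ma] [Ob mb]; split; first exact: vrD.
move=> [ab0 Oab'].
have [a0|a0] := eqVneq a 0; first by rewrite a0 add0r in ab0 Oab'; apply: mb.
apply: ma; split => //; have -> : a^-1 = (1 + b / a) * (a + b)^-1.
  by field; rewrite a0 ab0.
by apply: vrM => //; apply: vrD => //; exact: vr1.
Qed.

Lemma maxidealB a b : maxideal O a -> maxideal O b -> maxideal O (a - b).
Proof. by move=> ma mb; apply: maxidealD => //; exact: maxidealN. Qed.

Lemma nonmax_inv x : ~ maxideal O x -> x != 0 /\ O x^-1.
Proof.
move=> mx; case: (classic (O x)) => [Ox|]; last exact: vr_notin.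
by apply: NNPP => ux; apply: mx.
Qed.

Lemma vunit_nonmax x : O x -> ~ maxideal O x -> vunit x.
Proof. by move=> Ox /nonmax_inv [x0 Ox']. Qed.

Lemma vunit1D a : maxideal O a -> vunit (1 + a).
Proof.
move=> ma; have [Oa _] := ma; apply: vunit_nonmax; first by apply: vrD => //; exact: vr1.
by move=> m1a; have := maxidealB m1a ma; rewrite addrK => m1; exact: maxideal_vunitF m1 vunit1.
Qed.

End ValuationRing.

Section Henselian.
Variables (K : fieldType) (O : K -> Prop).
Hypothesis hO : henselian O.
Let vO : valuation_ring O := hO.1.

Lemma hensel_unit_root n w b : vunit O n%:R -> vunit O w -> O b ->
  maxideal O (b ^+ n - w) -> exists y, y ^+ n = w.
Proof.
move=> un uw Ob mbw; have n_gt0 : (0 < n)%N.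
  by rewrite lt0n; case: un => + _ _; apply: contraNneq => ->.
have ub : vunit O b.
  apply: (vunit_nonmax vO) => // mb; apply: (maxideal_vunitF _ uw).
  have mbn : maxideal O (b ^+ n).
    by rewrite -(prednK n_gt0) exprS; apply: (maxidealMr vO) => //; exact: vrX.
  by have := maxidealB vO mbn mbw; rewrite opprB addrC subrK.
case: hO => _ hensel; have [||||y [_ + _]] := hensel ('X^n - w%:P) b => //.
- move=> i; rewrite coefB coefXn coefC; apply: (vrB vO); first exact: vr_nat.
  by case: (i == 0)%N; [case: uw | exact: vr0].
- by rewrite hornerD hornerN hornerXn hornerC.
- rewrite derivB derivXn derivC subr0 hornerMn hornerXn -mulr_natr => m.
  by apply: (maxideal_vunitF m); apply: vunitM => //; exact: vunitX.
- by rewrite hornerD hornerN hornerXn hornerC => /eqP; rewrite subr_eq0 => /eqP; exists y.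
Qed.

(* A root r of X^2 + X + (n + 1) would give (2r + 1)^2 + (4n + 3) = 0. *)
Lemma henselian_vunit_natS (n : nat) :
  (forall (s : K) m, s ^+ 2 + m.+1%:R != 0) -> vunit O n.+1%:R.
Proof.
move=> sqrD_neq0; apply: (vunit_nonmax vO); first exact: vr_nat.
move=> mn; case: hO => _ hensel.
have [||||r [_ + _]] := hensel ('X^2 + 'X + n.+1%:R%:P) 0.
- move=> i; rewrite !coefD coefXn coefX coefC.
  apply: (vrD vO); first by apply: (vrD vO); exact: vr_nat.
  by case: (i == 0)%N; [case: mn | exact: vr0].
- exact: vr0.
- by rewrite !hornerD hornerXn hornerX hornerC expr0n /= !add0r.
- rewrite !derivD derivXn derivX derivC !hornerE /= => m.
  exact: maxideal_vunitF m (vunit1 vO).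
rewrite !hornerD hornerXn hornerX hornerC => root.
have := sqrD_neq0 (2 * r + 1) (4 * n + 2).
have -> : (2 * r + 1) ^+ 2 + (4 * n + 2).+1%:R = 4 * (r ^+ 2 + r + n.+1%:R) :> K by ring.
by rewrite root mulr0 eqxx.
Qed.

End Henselian.

Section PmPower.
Variables (K : fieldType) (p : nat).

Definition pm_pow (x : K) := exists y : K, y ^+ p = x \/ y ^+ p = - x.

Lemma pm_pow0 : (0 < p)%N -> pm_pow 0.
Proof. by move=> p_gt0; exists 0; left; rewrite expr0n eqn0Ngt p_gt0. Qed.

Lemma pm_pow_expr y : pm_pow (y ^+ p).
Proof. by exists y; left. Qed.

Lemma pm_powM a b : pm_pow a -> pm_pow b -> pm_pow (a * b).
Proof.
move=> [y ya] [z zb]; exists (y * z); rewrite exprMn.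
by case: ya => ->; case: zb => ->; rewrite ?mulrN ?mulNr ?opprK; auto.
Qed.

Lemma pm_powV a : pm_pow a -> pm_pow a^-1.
Proof. by move=> [y ya]; exists y^-1; rewrite exprVn -invrN; case: ya => ->; auto. Qed.

Lemma pm_powX a n : pm_pow a -> pm_pow (a ^+ n).
Proof.
move=> pa; elim: n => [|n IH]; last by rewrite exprS; exact: pm_powM.
by rewrite expr0 -(expr1n _ p); exact: pm_pow_expr.
Qed.

Lemma pm_powKl a b : a != 0 -> pm_pow a -> pm_pow (a * b) -> pm_pow b.
Proof. by move=> a0 pa pab; rewrite -(mulKf a0 b); apply: pm_powM => //; exact: pm_powV. Qed.

End PmPower.

Section ResidueRealClosed.
Variables (K : fieldType) (O : K -> Prop).
Hypotheses (vO : valuation_ring O) (rcO : residue_real_closed O).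

Lemma residue_real_closed_sqrD_neq0 (s : K) n : s ^+ 2 + n.+1%:R != 0.
Proof.
case: rcO => sum_sq_nonmax _ _; apply/eqP => sqrD0.
have sum_nseq_sq (a : K) m : \sum_(y <- nseq m a) y ^+ 2 = a ^+ 2 *+ m.
  by rewrite big_nseq iter_addr_0.
case: (classic (O s)) => [Os|/(vr_notin vO) [s0 Os']].
  apply: (sum_sq_nonmax (s :: nseq n 1)).
    by move=> y; rewrite in_cons mem_nseq => /orP [/eqP -> //|/andP [_ /eqP ->]]; exact: vr1.
  by rewrite big_cons sum_nseq_sq expr1n addrCA -mulrS sqrD0; exact: maxideal0.
apply: (sum_sq_nonmax (nseq n.+1 s^-1)); first by move=> y; rewrite mem_nseq => /andP [_ /eqP ->].
have -> : 1 + \sum_(y <- nseq n.+1 s^-1) y ^+ 2 = s^-1 ^+ 2 * (s ^+ 2 + n.+1%:R).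
  by rewrite sum_nseq_sq mulrDr -exprMn mulVf // expr1n mulr_natr.
by rewrite sqrD0 mulr0; exact: maxideal0.
Qed.

Hypothesis hO : henselian O.

Lemma vunit_pm_pow p u : prime p -> vunit O u -> pm_pow p u.
Proof.
move=> p_pr uu; have [_ Ou _] := uu.
have up : vunit O p%:R.
  rewrite -(prednK (prime_gt0 p_pr)); apply: henselian_vunit_natS => //.
  exact: residue_real_closed_sqrD_neq0.
case: rcO => _ sqr_or_opp odd_root.
have [p2|p_odd] := even_prime p_pr.
  have [b [Ob [mb|mb]]] := sqr_or_opp u Ou.
    have [|y yu] := hensel_unit_root hO up uu Ob; first by rewrite p2.
    by exists y; left.
  have [|y yu] := hensel_unit_root hO up (vunitN vO uu) Ob; first by rewrite p2 opprK.
  by exists y; right.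
have [|||b [Ob mb]] := odd_root ('X^p - u%:P).
- move=> i; rewrite coefB coefXn coefC; apply: (vrB vO); first exact: vr_nat.
  by case: (i == 0)%N => //; exact: vr0.
- by rewrite monicXnsubC ?prime_gt0.
- by rewrite size_XnsubC ?prime_gt0.
have [|y yu] := hensel_unit_root hO up uu Ob; last by exists y; left.
by move: mb; rewrite hornerD hornerN hornerXn hornerC.
Qed.

End ResidueRealClosed.

Section ConvexSubgroup.
Variables (K : fieldType) (OK : K -> Prop) (p : nat).
Hypothesis vK : valuation_ring OK.

Section ConvexGen.
Variable t : K.

(* g is nonzero with |v(g)| <= n v(t) for some n: for OK t this is the
   convex subgroup generated by v(t). *)
Definition convex_gen (g : K) :=
  g != 0 /\ exists n, OK (g * t ^+ n) /\ OK (g^-1 * t ^+ n).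

Hypothesis Ot : OK t.

Lemma convex_gen_subgroup : convex_subgroup OK convex_gen.
Proof.
split.
- by move=> g [].
- by split; [exact: oner_neq0 | exists 0%N; rewrite expr0 invr1 mulr1; split; exact: vr1].
- move=> a b [a0 [n [Oa Oa']]] [b0 [m [Ob Ob']]]; split; first by rewrite mulf_neq0.
  by exists (n + m)%N; rewrite exprD invfM; split; rewrite mulrACA; exact: vrM.
- by move=> a [a0 [n [Oa Oa']]]; split; [rewrite invr_eq0 | exists n; rewrite invrK].
- move=> a z [a0 [n [Oa Oa']]] z0 Oz Oaz; split => //; exists n; split.
    by apply: vrM => //; exact: vrX.
  have -> : z^-1 * t ^+ n = a / z * (a^-1 * t ^+ n) by rewrite mulrACA divff ?mul1r.
  exact: vrM.
Qed.

Lemma convex_gen_self : t != 0 -> convex_gen t.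
Proof.
move=> t0; split => //; exists 1%N; rewrite expr1 mulVf //.
by split; [exact: vrM | exact: vr1].
Qed.

Lemma pm_pow_convex_gen : t != 0 -> pm_pow p t ->
  (forall g, g != 0 -> OK g -> OK (g^-1 * t) -> pm_pow p g) ->
  forall g, convex_gen g -> pm_pow p g.
Proof.
move=> t0 pt base.
have pm_pow_bounded n g : g != 0 -> OK g -> OK (g^-1 * t ^+ n) -> pm_pow p g.
  elim: n g => [|n IH] g g0 Og; first by rewrite expr0 mulr1 => Og'; apply: base => //; exact: vrM.
  move=> Og'; case: (classic (OK (g^-1 * t ^+ n))); first exact: IH.
  move/(vr_notin vK) => [_]; rewrite invfM invrK => Ogt.
  have tn0 : t ^+ n != 0 by rewrite expf_neq0.
  rewrite -(divfK tn0 g); apply: pm_powM; last exact: pm_powX.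
  apply: base => //; first by rewrite mulf_neq0 ?invr_eq0.
  by rewrite invfM invrK -mulrA -exprSr.
move=> g [g0 [n [Ogt Og't]]]; case: (classic (OK g)) => [Og|/(vr_notin vK) [_ Og']].
  exact: pm_pow_bounded Og't.
by rewrite -[g]invrK; apply: pm_powV; apply: (pm_pow_bounded n) => //; rewrite ?invr_eq0 ?invrK.
Qed.

End ConvexGen.

Variable D : K -> Prop.
Hypothesis cD : convex_subgroup OK D.

Lemma convex_subgroup_neq0 d : D d -> d != 0.
Proof. by case: cD => + _ _ _ _; apply. Qed.

Lemma convex_subgroupV d : D d -> D d^-1.
Proof. by case: cD => _ _ _ + _; apply. Qed.

Lemma convex_subgroupP d z : D d -> z != 0 -> OK z -> OK (d / z) -> D z.
Proof. by case: cD => _ _ _ _; apply. Qed.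

Lemma p_divisible_pm_pow : (0 < p)%N -> (forall g, D g -> pm_pow p g) -> p_divisible OK p D.
Proof.
move=> p_gt0 pD.
have root_neq0 (h z : K) : h != 0 -> z ^+ p = h \/ z ^+ p = - h -> z != 0.
  move=> h0 zh; apply: contra_neq h0 => z0; move: zh.
  by rewrite z0 expr0n eqn0Ngt p_gt0 /= => -[|/eqP]; [move<- | rewrite eq_sym oppr_eq0 => /eqP].
have root_in_D (h z : K) : D h -> OK h -> z ^+ p = h \/ z ^+ p = - h -> D z.
  move=> Dh Oh zh; have z0 := root_neq0 h z (convex_subgroup_neq0 Dh) zh.
  have Ozp : OK (z ^+ p) by case: zh => ->; last exact: vrN.
  have Oz := vr_root vK p_gt0 Ozp; apply: (convex_subgroupP Dh z0 Oz).
  have zp : z ^+ p = z ^+ p.-1 * z by rewrite -exprSr prednK.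
  case: zh => [<-|zh]; first by rewrite zp mulfK //; exact: vrX.
  by rewrite -[h]opprK -zh mulNr zp mulfK //; apply: (vrN vK); exact: vrX.
move=> g Dg; have [y yg] := pD g Dg; have g0 := convex_subgroup_neq0 Dg.
exists y; split.
- case: (classic (OK g)) => [Og|/(vr_notin vK) [_ Og']]; first exact: root_in_D yg.
  rewrite -[y]invrK; apply: convex_subgroupV; apply: (root_in_D g^-1) => //.
    exact: convex_subgroupV.
  by rewrite !exprVn -invrN; case: yg => ->; auto.
- by case: yg => ->; rewrite ?mulNr divff //; [exact: vr1 | apply: (vrN vK); exact: vr1].
- by case: yg => ->; rewrite ?invrN ?mulrN divff //; [exact: vr1 | apply: (vrN vK); exact: vr1].
Qed.

Lemma pm_pow_p_divisible : p_divisible OK p D ->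
  (forall u, vunit OK u -> pm_pow p u) -> forall g, D g -> pm_pow p g.
Proof.
move=> pD punit g Dg; have [y [Dy Oyg Ogy]] := pD g Dg.
have [g0 y0] := (convex_subgroup_neq0 Dg, convex_subgroup_neq0 Dy).
have yp0 : y ^+ p != 0 by rewrite expf_neq0.
rewrite -(divfK yp0 g); apply: pm_powM; last exact: pm_pow_expr.
by apply: punit; split; rewrite ?invf_div // mulf_neq0 ?invr_eq0.
Qed.

Lemma maxidealM_convex_subgroup d z : D d -> OK z -> ~ D z -> maxideal OK (d * z).
Proof.
move=> Dd Oz Dz; apply: NNPP => /(nonmax_inv vK) [dz0 Odz']; apply: Dz.
have z0 : z != 0 by apply: contra_neq dz0 => ->; rewrite mulr0.
by apply: (convex_subgroupP (convex_subgroupV Dd)) => //; rewrite -invfM.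
Qed.

Lemma convex_subgroup_notin d x : D d -> ~ OK x -> OK (x / d) -> D x.
Proof.
move=> Dd /(vr_notin vK) [x0 Ox'] Oxd; rewrite -[x]invrK; apply: convex_subgroupV.
apply: (convex_subgroupP (convex_subgroupV Dd)); rewrite ?invr_eq0 //.
by rewrite invrK mulrC.
Qed.

End ConvexSubgroup.

Section AlmostRealClosed.
Variables (K : fieldType) (p : nat) (O OK : K -> Prop).
Hypotheses (p_pr : prime p) (hO : henselian O) (rcO : residue_real_closed O).
Hypotheses (hOK : henselian OK) (OK_sub : forall x, OK x -> O x).

Let vO : valuation_ring O := hO.1.
Let vK : valuation_ring OK := hOK.1.
Let p_gt0 : (0 < p)%N := prime_gt0 p_pr.

Lemma vunit_pm_pow_OK u : vunit OK u -> pm_pow p u.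
Proof. by move=> [u0 Ou Ou']; apply: (vunit_pm_pow vO rcO hO p_pr); split => //; exact: OK_sub. Qed.

Lemma maxideal_1D_root x : maxideal OK x -> exists z, z ^+ p = 1 + x.
Proof.
move=> mx; apply: (hensel_unit_root hOK (b := 1)).
- rewrite -(prednK p_gt0); apply: henselian_vunit_natS => // s n.
  exact: residue_real_closed_sqrD_neq0 vO rcO s n.
- exact: vunit1D.
- exact: vr1.
- by rewrite expr1n opprD addNKr; exact: maxidealN.
Qed.

Lemma psi_pP x : psi_p p x <-> maxideal OK x /\ ~ pm_pow p x.
Proof.
split=> [[npx [z zx]]|[mx npx]]; last by split => //; exact: maxideal_1D_root.
split => //; have x0 : x != 0 by apply: contra_not_neq npx => ->; exact: pm_pow0.
case: (classic (OK x)) => [Ox|nOx].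
  by apply: maxideal_nonunit => // /vunit_pm_pow_OK.
have [_ Ox'] := vr_notin vK nOx.
have mx' : maxideal OK x^-1 by apply: maxideal_nonunit => // -[_ _]; rewrite invrK.
(* Outside O_K, x = (1 + x) / (1 + x^-1) is a p-th power times a unit. *)
have ux' := vunit1D vK mx'; have [ux'0 _ _] := ux'.
have zx' : 1 + x = x * (1 + x^-1) by rewrite mulrDr mulr1 mulfV // addrC.
exfalso; apply: npx; rewrite -(mulfK ux'0 x) -zx' -zx.
by apply: pm_powM; [exact: pm_pow_expr | apply: vunit_pm_pow_OK; exact: vunitV].
Qed.

Variable D : K -> Prop.
Hypothesis hD : is_Gp OK p D.

Let cD : convex_subgroup OK D := let: And3 cD _ _ := hD in cD.

Lemma Gp_pm_pow g : D g -> pm_pow p g.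
Proof. by case: hD => _ pD _; exact: (pm_pow_p_divisible cD pD vunit_pm_pow_OK). Qed.

Lemma coarsening_phi x : coarsening OK D x -> phi_p p x.
Proof.
case=> [->|[d [Dd Oxd]]]; first by right; right.
have [x0|x0] := eqVneq x 0; first by right; right.
have psi_stable : pm_pow p x -> (forall z, maxideal OK z -> ~ pm_pow p z -> maxideal OK (x * z)) ->
    phi_p p x.
  move=> px mxz; have [y yx] := px; right; left; exists y; split => // z /psi_pP [mz npz].
  by apply/psi_pP; split; [exact: mxz | move/(pm_powKl x0 px)].
case: (classic (OK x)) => [Ox|nOx].
  case: (classic (pm_pow p x)) => [px|npx].
    by apply: psi_stable => // z mz _; rewrite mulrC; exact: maxidealMr.
  by left; apply/psi_pP; split => //; apply: maxideal_nonunit => // /vunit_pm_pow_OK.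
have Dx := convex_subgroup_notin vK cD Dd nOx Oxd.
apply: psi_stable => [|z [Oz _] npz]; first exact: Gp_pm_pow.
by apply: (maxidealM_convex_subgroup vK cD Dx Oz) => /Gp_pm_pow.
Qed.

Lemma Gp_psi_stable x : pm_pow p x -> ~ OK x ->
  (forall z, psi_p p z -> psi_p p (x * z)) -> D x.
Proof.
move=> px nOx x_psi; have [x0 Ox'] := vr_notin vK nOx.
have base g : g != 0 -> OK g -> OK (g^-1 * x^-1) -> pm_pow p g.
  move=> g0 Og Ogx; apply: NNPP => npg.
  have mg : maxideal OK g by apply: maxideal_nonunit => // /vunit_pm_pow_OK.
  have [[Oxg _] _] := (psi_pP (x * g)).1 (x_psi g ((psi_pP g).2 (conj mg npg))).
  apply: npg; apply: (pm_powKl x0 px); apply: vunit_pm_pow_OK.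
  by split; rewrite ?mulf_neq0 // invfM mulrC.
have gen_pm_pow := pm_pow_convex_gen vK Ox' (invr_neq0 x0) (pm_powV px) base.
have gen_sub := convex_gen_subgroup vK Ox'.
have : D x^-1.
  case: hD => _ _ maxD; apply: (maxD _ gen_sub (p_divisible_pm_pow vK gen_sub p_gt0 gen_pm_pow)).
  by apply: (convex_gen_self vK Ox'); rewrite invr_eq0.
by move/(convex_subgroupV cD); rewrite invrK.
Qed.

Lemma phi_coarsening x : phi_p p x -> coarsening OK D x.
Proof.
have D1 : D 1 by case: cD.
case=> [/psi_pP [[Ox _] _]|[[y [yx x_psi]]|->]]; last by left.
  by right; exists 1; rewrite divr1.
case: (classic (OK x)) => [Ox|nOx]; first by right; exists 1; rewrite divr1.
right; exists x; split; first by apply: Gp_psi_stable => //; exists y.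
by rewrite divff; [exact: vr1 | have [] := vr_notin vK nOx].
Qed.

End AlmostRealClosed.

Theorem proposition1p5 (K : fieldType) (p : nat) :
  prime p -> almost_real_closed K ->
  forall (OK : K -> Prop), canonical_henselian OK ->
  forall (D : K -> Prop), is_Gp OK p D ->
  forall x : K, phi_p p x <-> coarsening OK D x.
Proof.
move=> p_pr [O [hO rcO]] OK [hOK OK_min] D hD x.
have OK_sub := OK_min O hO.
split; [exact: (phi_coarsening p_pr hO rcO hOK OK_sub hD) |
        exact: (coarsening_phi p_pr hO rcO hOK OK_sub hD)].
Qed.
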